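(* Let $p$ be an odd prime and $\alpha$ an indeterminate over $\mathbb F_p$. The coefficients of the polynomial \[ G^{(\alpha)}(X)=-\sum_{k=1}^{p-1}\frac{1}{k}\,\frac{X^{k}}{\prod_{s=1}^{k-1}b_{1,s}(\alpha)}\in\mathbb F_p(\alpha)[X] \] (empty product equal to $1$) belong to the subring $\mathbb F_p[\alpha,(\alpha^{p-1}-1)^{-1}]$ of $\mathbb F_p(\alpha)$.
   Context: $\mathbb F_p$ is the field of $p$ elements, $\binom{x}{m}=x(x-1)\cdots(x-m+1)/m!$. For integers $0<r,s<p$ (interpreted as elements of $\mathbb F_p$), $b_{r,s}(\alpha)=\sum_{k=0}^{p-1}(-r/s)^k\binom{r\alpha-1}{p-1-k}\binom{s\alpha-1}{k}\in\mathbb F_p[\alpha]$. *)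

From HB Require Import structures.
From mathcomp Require Import all_boot all_order all_algebra.
Set Implicit Arguments. Unset Strict Implicit. Unset Printing Implicit Defensive.
Import GRing.Theory.
Local Open Scope ring_scope.

(* Generalized binomial coefficient of a polynomial:
   binom x m = x (x-1) ... (x-m+1) / m!  (m! must be invertible in F). *)
Definition binom_poly (F : fieldType) (x : {poly F}) (m : nat) : {poly F} :=
  (m`!%:R)^-1 *: \prod_(i < m) (x - (i%:R)%:P).

Definition b_poly (p r s : nat) : {poly 'F_p} :=
  \sum_(k < p) ((- ((r%:R : 'F_p) / (s%:R : 'F_p))) ^+ k) *:
     (binom_poly (r%:R *: 'X - 1) (p.-1 - k) * binom_poly (s%:R *: 'X - 1) k).

Notation Fpalpha p := {fraction {poly 'F_p}}.

Definition G_poly (p : nat) : {poly Fpalpha p} :=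
  - \sum_(1 <= k < p)
      (((k%:R : Fpalpha p)^-1 /
         \prod_(1 <= s < k) FracField.tofrac (b_poly p 1 s)) *: 'X^k).

Definition in_loc_ring (p : nat) (c : Fpalpha p) : Prop :=
  exists (f : {poly 'F_p}) (n : nat),
    c = FracField.tofrac f / (FracField.tofrac ('X^(p.-1) - 1)) ^+ n.

From mathcomp Require Import all_boot all_order all_algebra.
From mathcomp Require Import finfield.
From mathcomp Require Import zify ring.
Set Implicit Arguments. Unset Strict Implicit. Unset Printing Implicit Defensive.
Import GRing.Theory.
Local Open Scope ring_scope.

(* Write b_s for b_{1,s}.  It is the coefficient of z^(p-1) in
   (1 + z)^(alpha - 1) (1 - z/s)^(s alpha - 1), and since the two exponents
   combine to a constant, (alpha - 1) - (s alpha - 1)/s = 1/s - 1, the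
   logarithmic derivative of this series yields a recurrence bounding the
   degree of its n-th coefficient by n/2; so deg b_s <= (p-1)/2.  On the other
   hand every a in 1..p-1 with a + (s a mod p) <= p is a root of b_s, since each
   term of the defining sum has a vanishing binomial factor at alpha = a, and
   a |-> p - a shows that for s < p - 1 there are exactly (p-1)/2 such a.  Hence
   b_s is 0 or a constant times a product of distinct alpha - a with a <> 0,
   and then it divides alpha^(p-1) - 1. *)

Local Notation "x %:F" := (FracField.tofrac x).

Section Localization.
Variables (R : idomainType) (d : R).

Definition in_localization (c : {fraction R}) : Prop :=
  exists (f : R) (n : nat), c = f%:F / d%:F ^+ n.

Lemma in_localization_tofrac f : in_localization f%:F.
Proof. by exists f, 0%N; rewrite expr0 divr1. Qed.

Lemma in_localizationN c : in_localization c -> in_localization (- c).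
Proof. by move=> [f [n ->]]; exists (- f), n; rewrite rmorphN mulNr. Qed.

Lemma in_localizationM c1 c2 :
  in_localization c1 -> in_localization c2 -> in_localization (c1 * c2).
Proof.
move=> [f1 [n1 ->]] [f2 [n2 ->]]; exists (f1 * f2), (n1 + n2)%N.
by rewrite rmorphM exprD invfM mulrACA.
Qed.

Hypothesis d_neq0 : d != 0.

Let dF_neq0 n : d%:F ^+ n != 0.
Proof. by rewrite expf_neq0 // tofrac_eq0. Qed.

Lemma in_localizationD c1 c2 :
  in_localization c1 -> in_localization c2 -> in_localization (c1 + c2).
Proof.
move=> [f1 [n1 ->]] [f2 [n2 ->]].
exists (f1 * d ^+ n2 + f2 * d ^+ n1), (n1 + n2)%N.
by rewrite addf_div ?dF_neq0 // rmorphD !rmorphM !rmorphXn exprD.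
Qed.

Lemma in_localization_sum (I : Type) (r : seq I) (P : pred I) (F : I -> {fraction R}) :
  (forall i, P i -> in_localization (F i)) ->
  in_localization (\sum_(i <- r | P i) F i).
Proof.
move=> FP; apply: big_ind => //; last exact: in_localizationD.
by rewrite -tofrac0; apply: in_localization_tofrac.
Qed.

Lemma in_localization_inv_tofrac q h n :
  q * h = d ^+ n -> in_localization (q%:F)^-1.
Proof.
move=> qh; exists h, n.
have qhF : q%:F * h%:F = d%:F ^+ n by rewrite -rmorphM qh rmorphXn.
have /andP[q0 h0] : (q%:F != 0) && (h%:F != 0).
  by rewrite -negb_or -mulf_eq0 qhF dF_neq0.
by rewrite -qhF invfM mulrCA mulfV ?mulr1.
Qed.

Lemma in_localization_invM x y :
  in_localization x^-1 -> in_localization y^-1 -> in_localization (x * y)^-1.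
Proof. by rewrite invfM; apply: in_localizationM. Qed.

End Localization.

Lemma natr_fact_neq0 (F : idomainType) m n :
  (m <= n)%N -> n`!%:R != 0 :> F -> m`!%:R != 0 :> F.
Proof. by move=> mn; rewrite (fact_split mn) natrM mulf_eq0 negb_or => /andP[]. Qed.

Lemma size_polyB_leq (R : nzRingType) (q r : {poly R}) m :
  (size q <= m)%N -> (size r <= m)%N -> (size (q - r)%R <= m)%N.
Proof.
move=> qm rm; apply: leq_trans (size_polyD _ _) _.
by rewrite size_polyN geq_max qm rm.
Qed.

Section BinomialConvolution.
Variable F : fieldType.

Lemma binom_polyS (b : {poly F}) i : (i.+1)`!%:R != 0 :> F ->
  i.+1%:R *: binom_poly b i.+1 = (b - (i%:R)%:P) * binom_poly b i.
Proof.
rewrite factS natrM mulf_eq0 negb_or => /andP[i1_neq0 _].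
rewrite /binom_poly big_ord_recr /= scalerA [RHS]mulrC -scalerAl.
by congr (_ *: _); rewrite factS natrM invfM mulrA mulfV ?mul1r.
Qed.

Variables (be ga : {poly F}) (t : F).

Local Notation term n l := (binom_poly be (n - l) * (t ^+ l *: binom_poly ga l)).

Definition binom_conv n := \sum_(l < n.+1) term n l.
Definition binom_convL n := \sum_(l < n.+1) (n - l)%:R *: term n l.
Definition binom_convR n := \sum_(l < n.+1) l%:R *: term n l.

Lemma binom_conv_split n : n%:R *: binom_conv n = binom_convL n + binom_convR n.
Proof.
rewrite scaler_sumr -big_split; apply: eq_bigr => [[l /= ln]] _.
by rewrite -scalerDl -natrD subnK.
Qed.

Lemma binom_convL_rec n : (n.+1)`!%:R != 0 :> F ->
  binom_convL n.+1 = be * binom_conv n - binom_convL n.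
Proof.
move=> fact_neq0; rewrite /binom_convL big_ord_recr /= subnn scale0r addr0.
rewrite mulr_sumr -sumrB; apply: eq_bigr => [[l /= ln]] _.
rewrite subSn // scalerAl (@binom_polyS be (n - l)%N).
  by rewrite -mulrA mulrBl mul_polyC.
by apply: natr_fact_neq0 fact_neq0; lia.
Qed.

Lemma binom_convR_rec n : (n.+1)`!%:R != 0 :> F ->
  binom_convR n.+1 = t *: (ga * binom_conv n) - t *: binom_convR n.
Proof.
move=> fact_neq0; rewrite /binom_convR big_ord_recl /= scale0r add0r.
rewrite mulr_sumr !scaler_sumr -sumrB; apply: eq_bigr => [[l /= ln]] _.
rewrite /bump /= add1n subSS scalerAr scalerA [_ * t ^+ _]mulrC -scalerA.
rewrite (@binom_polyS ga l); last exact: natr_fact_neq0 fact_neq0.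
by rewrite -!mul_polyC !rmorphXn /= exprS; ring.
Qed.

Variable c : F.
Hypothesis be_ga : be + t *: ga = c%:P.
Hypotheses (size_be : (size be <= 2)%N) (size_ga : (size ga <= 2)%N).

Lemma binom_conv_rec n : (n.+1)`!%:R != 0 :> F ->
  n.+1%:R *: binom_conv n.+1 = c *: binom_conv n - binom_convL n - t *: binom_convR n.
Proof.
move=> fact_neq0; rewrite binom_conv_split binom_convL_rec // binom_convR_rec //.
by rewrite -[c *: _]mul_polyC -be_ga -!mul_polyC; ring.
Qed.

Lemma size_binom_conv n : n`!%:R != 0 :> F ->
  [/\ (size (binom_conv n) <= n./2.+1)%N,
      (size (binom_convL n) <= n.+1./2.+1)%N &
      (size (binom_convR n) <= n.+1./2.+1)%N].
Proof.
elim: n => [|n IH] fact_neq0.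
  rewrite /binom_conv /binom_convL /binom_convR !big_ord1 !scale0r size_poly0.
  by rewrite /binom_poly !big_ord0 fact0 invr1 !scale1r mulr1 size_poly1.
have [sK sL sR] := IH (natr_fact_neq0 (leqnSn n) fact_neq0).
have sMK (q : {poly F}) : (size q <= 2)%N -> (size (q * binom_conv n)%R <= n.+2./2.+1)%N.
  by move=> sq; apply: leq_trans (size_polyMleq _ _) _; lia.
have sZ a (q : {poly F}) m : (size q <= m)%N -> (size (a *: q)%R <= m)%N.
  by move=> sq; apply: leq_trans (size_scale_leq _ _) _.
have n1_neq0 : n.+1%:R != 0 :> F.
  by apply: contraNneq fact_neq0; rewrite factS natrM => ->; rewrite mul0r.
split.
- rewrite -(size_scale _ n1_neq0) binom_conv_rec //.
  by rewrite !size_polyB_leq ?sZ //; apply: leq_trans sK _; lia.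
- by rewrite binom_convL_rec // size_polyB_leq ?sMK //; apply: leq_trans sL _; lia.
- rewrite binom_convR_rec // size_polyB_leq ?sZ ?sMK //.
  by apply: leq_trans sR _; lia.
Qed.

End BinomialConvolution.

Lemma root_binom_poly (F : fieldType) (q : {poly F}) m x j :
  (j < m)%N -> q.[x] = j%:R -> root (binom_poly q m) x.
Proof.
move=> jm qx; rewrite /root /binom_poly hornerZ horner_prod (bigD1 (Ordinal jm)) //=.
by rewrite hornerD hornerN hornerC qx subrr mul0r mulr0.
Qed.

Lemma eqp_prod_XsubC_roots (F : fieldType) (q : {poly F}) (rs : seq F) :
  q != 0 -> all (root q) rs -> uniq rs -> (size q <= (size rs).+1)%N ->
  q %= \prod_(z <- rs) ('X - z%:P).
Proof.
move=> q_neq0 rs_roots rs_uniq size_q.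
have rs_dvd : \prod_(z <- rs) ('X - z%:P) %| q.
  by rewrite uniq_roots_dvdp ?uniq_rootsE.
rewrite eqp_sym -dvdp_size_eqp // size_prod_XsubC eqn_leq size_q /=.
by rewrite -[X in (X <= _)%N](size_prod_XsubC _ id) dvdp_leq.
Qed.

Section PrimeField.
Variable p : nat.
Hypothesis p_prime : prime p.

Lemma natr_Fp_neq0 n : (0 < n < p)%N -> (n%:R : 'F_p) != 0.
Proof.
by move=> /andP[n_gt0 n_lt]; rewrite -(dvdn_pcharf (pchar_Fp p_prime)) gtnNdvd.
Qed.

Lemma fact_Fp_neq0 n : (n < p)%N -> (n`!%:R : 'F_p) != 0.
Proof.
elim: n => [|n IH] n_lt; first by rewrite fact0 oner_eq0.
by rewrite factS natrM mulf_neq0 ?IH ?natr_Fp_neq0 // ltnW.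
Qed.

Lemma Fp_fermat (z : 'F_p) : z != 0 -> z ^+ p.-1 = 1.
Proof.
move=> z_neq0; apply: (mulfI z_neq0).
by rewrite mulr1 -exprS prednK ?prime_gt0 // -{3}(card_Fp p_prime) expf_card.
Qed.

Lemma mulmod_gt0 s a : (0 < s < p)%N -> (0 < a < p)%N -> (0 < s * a %% p)%N.
Proof.
move=> /andP[s_gt0 s_lt] /andP[a_gt0 a_lt].
by rewrite lt0n -/(dvdn p _) Euclid_dvdM // !gtnNdvd.
Qed.

Lemma mulmod_subr s a : (0 < s < p)%N -> (0 < a < p)%N ->
  (s * (p - a) %% p = p - s * a %% p)%N.
Proof.
move=> s_range a_range; have a_le : (a <= p)%N by case/andP: a_range => _ /ltnW.
rewrite mulnBr modnB ?prime_gt0 ?leq_mul2l ?a_le ?orbT // modnMl.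
by rewrite mulmod_gt0 // mul1n addn0.
Qed.

Definition root_cond s a := (a + s * a %% p <= p)%N.

Lemma root_b_poly s a : (0 < s < p)%N -> (0 < a < p)%N -> root_cond s a ->
  root (b_poly p 1 s) a%:R.
Proof.
move=> s_range a_range; rewrite /root_cond /root /b_poly horner_sum => cond.
have r_gt0 := mulmod_gt0 s_range a_range.
apply/eqP/big1 => -[k /= k_lt] _; rewrite hornerZ hornerM.
have [a_small|k_big] := ltnP (a - 1) (p.-1 - k).
  rewrite (eqP (root_binom_poly a_small _)) ?mul0r ?mulr0 //.
  by rewrite !hornerE natrB ?mul1r //; case/andP: a_range.
rewrite (eqP (root_binom_poly (_ : s * a %% p - 1 < k)%N _)) ?mulr0 //; first lia.
by rewrite !hornerE natrB -?natrM ?Fp_nat_mod.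
Qed.

Lemma root_cond_subr s a : (0 < s)%N -> (s.+1 < p)%N -> (0 < a < p)%N ->
  root_cond s (p - a)%N = ~~ root_cond s a.
Proof.
move=> s_gt0 s1_lt a_range; have s_range : (0 < s < p)%N by lia.
rewrite /root_cond mulmod_subr //.
have r_gt0 := mulmod_gt0 s_range a_range.
have r_lt : (s * a %% p < p)%N by rewrite ltn_mod prime_gt0.
have : (a + s * a %% p != p)%N.
  apply: contraTneq (_ : ~~ (p %| s.+1 * a))%N => [sum_eq|].
    by rewrite /dvdn mulSn -modnDmr sum_eq modnn.
  by rewrite Euclid_dvdM // !gtnNdvd //; lia.
by move: r_gt0 r_lt; case/andP: a_range; lia.
Qed.

Definition b_roots s : seq 'F_p := [seq a%:R | a <- iota 1 p.-1 & root_cond s a].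

Lemma uniq_b_roots s : uniq (b_roots s).
Proof.
rewrite map_inj_in_uniq ?filter_uniq ?iota_uniq // => x y.
rewrite !mem_filter !mem_iota => /andP[_ x_range] /andP[_ y_range] /(congr1 val).
by rewrite /= !val_Fp_nat // !modn_small //; lia.
Qed.

Lemma count_root_cond s : (0 < s)%N -> (s.+1 < p)%N ->
  count (root_cond s) (index_iota 1 p) = count (predC (root_cond s)) (index_iota 1 p).
Proof.
move=> s_gt0 s1_lt; rewrite -sum1_count big_nat_rev sum1_count.
apply: eq_in_count => a; rewrite mem_index_iota => a_range.
by rewrite /= add1n subSS root_cond_subr.
Qed.

Lemma size_b_roots s : (0 < s)%N -> (s.+1 < p)%N -> (2 * size (b_roots s))%N = p.-1.
Proof.
move=> s_gt0 s1_lt; rewrite size_map size_filter -subn1 -/(index_iota 1 p).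
have := count_predC (root_cond s) (index_iota 1 p).
by rewrite -count_root_cond // /index_iota size_iota mul2n -addnn => halves.
Qed.

Lemma Xpred_sub1_neq0 : 'X^(p.-1) - 1 != 0 :> {poly 'F_p}.
Proof.
by rewrite -polyC1 monic_neq0 // monicXnsubC // -ltnS prednK ?prime_gt0 ?prime_gt1.
Qed.

Lemma size_b_poly s : (0 < s < p)%N -> (size (b_poly p 1 s) <= p.-1./2.+1)%N.
Proof.
move=> s_range; have s_neq0 : s%:R != 0 :> 'F_p by apply: natr_Fp_neq0.
have b_conv : b_poly p 1 s =
    binom_conv (1%:R *: 'X - 1) (s%:R *: 'X - 1) (- (1%:R / s%:R)) p.-1.
  rewrite /b_poly /binom_conv prednK ?prime_gt0 //.
  by apply: eq_bigr => k _; rewrite scalerAr.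
have be_ga : (1%:R *: 'X - 1) + (- (1%:R / s%:R)) *: (s%:R *: 'X - 1) =
    (s%:R^-1 - 1)%:P :> {poly 'F_p}.
  rewrite scalerBr scalerA mulNr mul1r mulVf // scaleN1r scale1r.
  by rewrite alg_polyC polyCB polyC1 polyCN; ring.
have size_lin (a : 'F_p) : (size (a *: 'X - 1)%R <= 2)%N.
  rewrite size_polyB_leq ?size_poly1 //.
  by apply: leq_trans (size_scale_leq _ _) _; rewrite size_polyX.
have fact_neq0 : (p.-1)`!%:R != 0 :> 'F_p.
  by rewrite fact_Fp_neq0 // ltn_predL prime_gt0.
by have [] := size_binom_conv be_ga (size_lin _) (size_lin _) fact_neq0; rewrite -b_conv.
Qed.

Lemma b_poly_eq0_or_dvdp s : (0 < s)%N -> (s.+1 < p)%N ->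
  b_poly p 1 s = 0 \/ b_poly p 1 s %| 'X^(p.-1) - 1.
Proof.
move=> s_gt0 s1_lt; have [->|b_neq0] := eqVneq (b_poly p 1 s) 0; [by left | right].
have b_roots_root : all (root (b_poly p 1 s)) (b_roots s).
  apply/allP => z /mapP[a]; rewrite mem_filter mem_iota => /andP[cond a_range] ->.
  by apply: root_b_poly => //; lia.
have size_b : (size (b_poly p 1 s) <= (size (b_roots s)).+1)%N.
  have := size_b_poly (_ : 0 < s < p)%N; have := size_b_roots s_gt0 s1_lt; lia.
rewrite (eqp_dvdl _ (eqp_prod_XsubC_roots b_neq0 b_roots_root (uniq_b_roots s) size_b)).
rewrite uniq_roots_dvdp ?uniq_rootsE ?uniq_b_roots //.
apply/allP => z /mapP[a]; rewrite mem_filter mem_iota => /andP[_ a_range] ->.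
by rewrite /root !hornerE Fp_fermat ?subrr // natr_Fp_neq0 //; lia.
Qed.

End PrimeField.

(* When [b_{1,s} = 0] the coefficient of [G] is computed with the junk value
   [0^-1 = 0], which also lies in the ring. *)
Lemma in_localization_inv_b_poly p s : prime p -> (0 < s)%N -> (s.+1 < p)%N ->
  in_localization ('X^(p.-1) - 1) (b_poly p 1 s)%:F^-1.
Proof.
move=> p_prime s_gt0 s1_lt.
case: (b_poly_eq0_or_dvdp p_prime s_gt0 s1_lt) => [->|/dvdpP[h D_eq]].
  by rewrite tofrac0 invr0 -tofrac0; apply: in_localization_tofrac.
apply: (in_localization_inv_tofrac (Xpred_sub1_neq0 p_prime) (_ : _ * h = _ ^+ 1)).
by rewrite expr1 D_eq mulrC.
Qed.

Theorem theorem5 (p : nat) (hp : prime p) (hodd : odd p) :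
  forall i : nat, in_loc_ring (G_poly p)`_i.
Proof.
move=> i; change (in_localization ('X^(p.-1) - 1) (G_poly p)`_i).
have D_neq0 := Xpred_sub1_neq0 hp.
rewrite coefN coef_sum big_nat_cond.
apply/in_localizationN/(in_localization_sum D_neq0) => k /andP[/andP[k_gt0 k_lt] _].
rewrite coefZ coefXn; apply: in_localizationM; last first.
  by rewrite -(rmorph_nat (@FracField.tofrac _)); apply: in_localization_tofrac.
rewrite -invfM; apply: in_localization_invM.
  rewrite -(rmorph_nat (@FracField.tofrac _)).
  apply: (@in_localization_inv_tofrac _ _ D_neq0 _ (k%:R^-1)%:P 0%N).
  by rewrite -polyC_natr -polyCM mulfV ?natr_Fp_neq0 ?k_gt0.
rewrite big_nat_cond; apply: (big_ind (fun x => in_localization _ x^-1)).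
- by rewrite invr1 -tofrac1; apply: in_localization_tofrac.
- exact: in_localization_invM.
move=> s /andP[/andP[s_gt0 s_lt] _].
by apply: in_localization_inv_b_poly => //; lia.
Qed.
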